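(* Let $f\in\mathrm{LC}$ satisfy (H$_1$): there exist $\alpha,\beta\in L^1_{loc}$ with $\beta\ge0$ such that $2\langle f(t,x),x\rangle\le\alpha(t)|x|^2+\beta(t)$ for a.e. $(t,x)\in\mathbb R^{1+N}$. If $x(\cdot)$ is a solution of $\dot x=f(t,x)$ defined on an interval $I$, then $2\langle f(t,x(t)),x(t)\rangle\le\alpha(t)|x(t)|^2+\beta(t)$ for a.e. $t\in I$.
   Context: $\mathrm{LC}$: Borel measurable $f:\mathbb R\times\mathbb R^N\to\mathbb R^N$ such that for every compact $K$ there are $m^K,l^K\in L^1_{loc}$ with $|f(t,x)|\le m^K(t)$ and $|f(t,x)-f(t,y)|\le l^K(t)|x-y|$ for $x,y\in K$, a.e. $t$. Solutions are in the Carathéodory sense (absolutely continuous, satisfying the equation a.e.). $\langle\cdot,\cdot\rangle$ is the Euclidean inner product. *)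

From HB Require Import structures.
From mathcomp Require Import all_boot all_order all_algebra.
From mathcomp Require Import all_classical all_reals all_analysis.
Set Implicit Arguments. Unset Strict Implicit. Unset Printing Implicit Defensive.
Import Order.TTheory GRing.Theory Num.Theory.
Import numFieldNormedType.Exports.
Local Open Scope classical_set_scope.
Local Open Scope ring_scope.

Definition dotv (R : realType) (N : nat) (u v : 'rV[R]_N) : R :=
  \sum_(i < N) u 0 i * v 0 i.

Definition enorm (R : realType) (N : nat) (u : 'rV[R]_N) : R :=
  Num.sqrt (dotv u u).

Definition rbox (R : realType) (N : nat) (a b : R) (a' b' : 'rV[R]_N)
  : set (R * 'rV[R]_N) :=
  [set p : R * 'rV[R]_N | (a <= p.1 <= b) /\ forall i, a' 0 i <= p.2 0 i <= b' 0 i].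

Definition rbox_vol (R : realType) (N : nat) (a b : R) (a' b' : 'rV[R]_N) : R :=
  Num.max 0 (b - a) * \prod_(i < N) Num.max 0 (b' 0 i - a' 0 i).

(* S is a Lebesgue-null subset of R^{1+N}: for every eps > 0 it is covered by
   countably many boxes of total volume <= eps (Lebesgue outer measure 0). *)
Definition null_set_RN (R : realType) (N : nat) (S : set (R * 'rV[R]_N)) :=
  forall eps : R, 0 < eps ->
  exists (a b : nat -> R) (a' b' : nat -> 'rV[R]_N),
    S `<=` \bigcup_k rbox (a k) (b k) (a' k) (b' k) /\
    forall m, \sum_(k < m) rbox_vol (a k) (b k) (a' k) (b' k) <= eps.

Definition ae_RN (R : realType) (N : nat) (P : R -> 'rV[R]_N -> Prop) :=
  null_set_RN [set p | ~ P p.1 p.2].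

Definition L1loc (R : realType) (g : R -> R) := locally_integrable setT g.

Definition borel_measurable_RN (R : realType) (N : nat)
  (f : R -> 'rV[R]_N -> 'rV[R]_N) :=
  forall U : set 'rV[R]_N, open U ->
    <<s setT, [set V : set (R * 'rV[R]_N) | open V] >>
      [set p | U (f p.1 p.2)].

Definition LC (R : realType) (N : nat) (f : R -> 'rV[R]_N -> 'rV[R]_N) :=
  borel_measurable_RN f /\
  forall K : set 'rV[R]_N, compact K ->
  exists mK lK : R -> R, L1loc mK /\ L1loc lK /\
    {ae (@lebesgue_measure R), forall t,
       forall x y, K x -> K y ->
         enorm (f t x) <= mK t /\
         enorm (f t x - f t y) <= lK t * enorm (x - y)}.

Definition abs_cont_on (R : realType) (N : nat) (u : R -> 'rV[R]_N) (c d : R) :=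
  forall eps : R, 0 < eps -> exists delta : R, 0 < delta /\
    forall (n : nat) (a b : 'I_n -> R),
      (forall k, c <= a k <= b k /\ b k <= d) ->
      (forall k l, k != l -> b k <= a l \/ b l <= a k) ->
      \sum_(k < n) (b k - a k) < delta ->
      \sum_(k < n) enorm (u (b k) - u (a k)) < eps.

Definition cara_solution (R : realType) (N : nat)
  (f : R -> 'rV[R]_N -> 'rV[R]_N) (I : set R) (x : R -> 'rV[R]_N) :=
  (forall c d, I c -> I d -> c <= d -> abs_cont_on x c d) /\
  {ae (@lebesgue_measure R), forall t, I t ->
     derivable x t 1 /\ 'D_1 x t = f t (x t)}.

From HB Require Import structures.
From mathcomp Require Import all_boot all_order all_algebra.
From mathcomp Require Import all_classical all_reals all_analysis.
From mathcomp Require Import ring lra measurable_realfun.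
Import Order.TTheory GRing.Theory Num.Theory.
Import numFieldNormedType.Exports.
Local Open Scope classical_set_scope.
Local Open Scope ring_scope.
Set Implicit Arguments. Unset Strict Implicit. Unset Printing Implicit Defensive.

(* If the growth inequality fails at (t, x t) and f t is continuous, which holds
   for a.e. t because f t is locally Lipschitz, then it fails on a whole cube of
   side 2/(n+1) around x t.  So, off a null set, a bad time t lies in some B_n,
   the set of t whose section S_t of the exceptional null set S contains the cube
   of side 2/(n+1) centred at x t.  Each B_n is null, however irregular x is: if S
   is covered by boxes [a_k, b_k] x Q_k of total volume <= e, then for t in B_n
   the Q_k with t in [a_k, b_k] cover that cube, so
   sum_k |Q_k| 1_[a_k, b_k](t) >= (2/(n+1))^N, and integrating in t gives
   (2/(n+1))^N lambda(B_n) <= e.  The bound |cube| <= sum_k |Q_k| for a countable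
   cover is itself proved by integrating out one coordinate at a time. *)

Section LebesgueSeriesOfIndicators.
Variable R : realType.
Local Notation lambda := (@lebesgue_measure R).

Lemma lebesgue_measure_itvcc (a b : R) :
  lambda `[a, b] = (Num.max 0 (b - a))%:E.
Proof.
rewrite lebesgue_measure_itv /= lte_fin.
case: leP => ab; first by rewrite max_l // subr_le0.
by rewrite max_r ?subr_ge0 ?ltW // EFinB.
Qed.

Lemma indic_itvccE (a b t : R) : \1_(`[a, b]) t = ((a <= t <= b)%R)%:R :> R.
Proof.
by rewrite indicE (_ : (t \in _) = (a <= t <= b)%R) //; apply/idP/idP; rewrite inE /= in_itv.
Qed.

Variables (a b c : nat -> R).
Hypothesis c_ge0 : forall k, 0 <= c k.

Local Notation g := (fun t : R => \sum_(k <oo) (c k * \1_(`[a k, b k]) t)%:E)%E.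

Let series_indic_term_ge0 k t : (0 <= (c k * \1_(`[a k, b k]) t)%:E)%E.
Proof. by rewrite lee_fin mulr_ge0. Qed.

Lemma measurable_series_indic (D : set R) : measurable_fun D g.
Proof.
apply: (@ge0_emeasurable_sum _ _ _ _ _ xpredT) => [k t _ _|k _] //.
by apply/measurable_EFinP/measurable_funM => //; exact: measurable_indic.
Qed.

Lemma integral_series_indic :
  (\int[lambda]_t g t = \sum_(k <oo) (c k * Num.max 0 (b k - a k))%:E)%E.
Proof.
rewrite integral_nneseries //; last first.
  by move=> k; apply/measurable_EFinP/measurable_funM => //; exact: measurable_indic.
apply: eq_eseriesr => k _; under eq_integral do rewrite EFinM.
rewrite ge0_integralZl_EFin //; last exact/measurable_EFinP/measurable_indic.
by rewrite integral_indic // setIT EFinM; congr (_ * _)%E; exact: lebesgue_measure_itvcc.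
Qed.

Lemma markov_series_indic (D : set R) (C : R) : measurable D -> 0 <= C ->
  (forall t, D t -> (C%:E <= g t)%E) ->
  (C%:E * lambda D <= \sum_(k <oo) (c k * Num.max 0 (b k - a k))%:E)%E.
Proof.
move=> mD C0 Cg; rewrite -integral_series_indic -integral_cst //.
apply: (@le_trans _ _ (\int[lambda]_(t in D) g t)%E).
  by apply: ge0_le_integral => //; exact: measurable_series_indic.
apply: ge0_subset_integral => //; first exact: measurable_series_indic.
by move=> t _; apply: nneseries_ge0.
Qed.

End LebesgueSeriesOfIndicators.

Lemma exists_natSinv_le (R : archiRealFieldType) (r : R) : 0 < r ->
  exists n : nat, n.+1%:R^-1 <= r.
Proof.
move=> r0; near \oo => n; exists n; apply/ltW; near: n.
exact: near_infty_natSinv_lt (PosNum r0).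
Unshelve. all: by end_near. Qed.

Lemma nneseries_ge_term (R : realType) (u : nat -> R) k :
  (forall n, 0 <= u n) -> ((u k)%:E <= \sum_(n <oo) (u n)%:E)%E.
Proof.
move=> u0; apply: le_trans (nneseries_lim_ge k.+1 _); last by move=> n _ _; rewrite lee_fin.
by rewrite big_nat_recr //= leeDr //; apply: sume_ge0 => n _; rewrite lee_fin.
Qed.

Lemma nneseries_le_of_sums (R : realType) (u : nat -> R) (x : R) :
  (forall n, 0 <= u n) -> (forall m, \sum_(k < m) u k <= x) ->
  (\sum_(k <oo) (u k)%:E <= x%:E)%E.
Proof.
move=> u0 ux; apply: lime_le.
  by apply: is_cvg_nneseries => n _ _; rewrite lee_fin.
by apply: nearW => m; rewrite sumEFin big_mkord lee_fin.
Qed.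

Lemma negligible_small_covers d (T : measurableType d) (R : realType)
    (mu : {measure set T -> \bar R}) (B : set T) :
  (forall e : R, 0 < e ->
     exists D, [/\ measurable D, B `<=` D & (mu D <= e%:E)%E]) ->
  mu.-negligible B.
Proof.
move=> small; have /choice[D HD] : forall j : nat,
    exists D, [/\ measurable D, B `<=` D & (mu D <= (j.+1%:R^-1 : R)%:E)%E].
  by move=> j; apply: small; rewrite invr_gt0.
have mD : measurable (\bigcap_j D j).
  by apply: bigcapT_measurable => j; case: (HD j).
exists (\bigcap_j D j); split => //; last by move=> t Bt j _; case: (HD j) => _ /(_ t Bt).
apply/eqP; rewrite eq_le measure_ge0 andbT; apply/lee_addgt0Pr => e e0.
have [j je] := exists_natSinv_le e0; case: (HD j) => mDj _ muDj; rewrite add0e.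
apply: le_trans (_ : mu (D j) <= _)%E; last by apply: le_trans muDj _; rewrite lee_fin.
by apply: le_measure; rewrite ?inE // => t; apply.
Qed.

Definition row_upd (T : Type) (N : nat) (z : 'rV[T]_N) (i0 : 'I_N) (t : T) :
  'rV[T]_N := \row_j (if j == i0 then t else z 0 j).

Section BoxCovers.
Variables (R : realType) (N : nat) (a' b' : nat -> 'rV[R]_N) (A : nat -> bool).

Definition box_side (i : 'I_N) (k : nat) : R := Num.max 0 (b' k 0 i - a' k 0 i).

Definition in_box_side (i : 'I_N) (k : nat) (s : R) : bool :=
  a' k 0 i <= s <= b' k 0 i.

(* The coordinates below m are integrated out, the others are frozen at z. *)
Definition box_factor (m : nat) (z : 'rV[R]_N) (i : 'I_N) (k : nat) : R :=
  if (i < m)%N then box_side i k else (in_box_side i k (z 0 i))%:R.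

Definition box_section_weight (m : nat) (z : 'rV[R]_N) (k : nat) : R :=
  (A k)%:R * \prod_(i < N) box_factor m z i k.

Definition box_section_coweight (m : nat) (z : 'rV[R]_N) (i0 : 'I_N) (k : nat) : R :=
  (A k)%:R * \prod_(i < N | i != i0) box_factor m.+1 z i k.

Lemma box_factor_ge0 m z i k : 0 <= box_factor m z i k.
Proof. by rewrite /box_factor; case: ifP => _ //; rewrite le_max lexx. Qed.

Lemma box_section_weight_ge0 m z k : 0 <= box_section_weight m z k.
Proof. by rewrite mulr_ge0 // prodr_ge0 // => i _; exact: box_factor_ge0. Qed.

Lemma box_section_coweight_ge0 m z i0 k : 0 <= box_section_coweight m z i0 k.
Proof. by rewrite mulr_ge0 // prodr_ge0 // => i _; exact: box_factor_ge0. Qed.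

Section SplitCoordinate.
Variables (m : nat) (i0 : 'I_N).
Hypothesis i0m : val i0 = m.

Lemma box_section_weight_upd z t k :
  box_section_weight m (row_upd z i0 t) k =
  box_section_coweight m z i0 k * \1_(`[a' k 0 i0, b' k 0 i0]) t.
Proof.
rewrite /box_section_weight /box_section_coweight (bigD1 i0) //= -mulrA; congr (_ * _).
rewrite mulrC /box_factor i0m ltnn mxE eqxx indic_itvccE; congr (_ * _).
apply: eq_bigr => i ii0.
rewrite /row_upd mxE (negbTE ii0) ltnS [(i <= _)%N]leq_eqVlt -i0m.
by have /negbTE -> : (i : nat) != val i0 := ii0.
Qed.

Lemma box_section_weight_succ z k :
  box_section_weight m.+1 z k = box_section_coweight m z i0 k * box_side i0 k.
Proof.
rewrite /box_section_weight /box_section_coweight (bigD1 i0) //= -mulrA; congr (_ * _).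
by rewrite mulrC /box_factor i0m ltnSn.
Qed.

End SplitCoordinate.

Lemma box_cover_section m (y z : 'rV[R]_N) (r : R) : 0 < r -> (m <= N)%N ->
  (forall p : 'rV[R]_N,
     (forall i : 'I_N, (i < m)%N -> `|p 0 i - y 0 i| <= r) ->
     (forall i : 'I_N, (m <= i)%N -> p 0 i = z 0 i) ->
     exists2 k, A k & forall i, in_box_side i k (p 0 i)) ->
  (((2 * r) ^+ m)%:E <= \sum_(k <oo) (box_section_weight m z k)%:E)%E.
Proof.
move=> r0; elim: m z => [|m IH] z mN cover.
  have [k Ak zk] : exists2 k, A k & forall i, in_box_side i k (z 0 i).
    by apply: cover => // i; rewrite ltn0.
  apply: le_trans (nneseries_ge_term k (box_section_weight_ge0 0 z)).
  rewrite expr0 lee_fin /box_section_weight Ak mul1r big1 // => i _.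
  by rewrite /box_factor ltn0 zk.
pose i0 : 'I_N := Ordinal mN.
have i0m : val i0 = m by [].
have slice t : `[y 0 i0 - r, y 0 i0 + r]%classic t -> (((2 * r) ^+ m)%:E <=
    \sum_(k <oo) (box_section_coweight m z i0 k * \1_(`[a' k 0 i0, b' k 0 i0]) t)%:E)%E.
  rewrite /= in_itv /= => /andP[t1 t2]; under eq_eseriesr do rewrite -(box_section_weight_upd i0m).
  apply: IH; first exact: ltnW.
  move=> p near_y frozen; apply: cover => i im.
    have [->|ii0] := eqVneq i i0.
      by rewrite frozen /row_upd ?mxE ?eqxx ?i0m // ler_norml; apply/andP; split; lra.
    by apply: near_y; rewrite ltn_neqAle -i0m (inj_eq val_inj) ii0 -ltnS.
  have ii0 : i != i0 by rewrite -(inj_eq val_inj) i0m neq_ltn im orbT.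
  by rewrite frozen ?(ltnW im) // mxE (negbTE ii0).
have := markov_series_indic (box_section_coweight_ge0 m z i0) (measurable_itv _)
  (exprn_ge0 m (mulr_ge0 (ler0n _ 2) (ltW r0))) slice.
rewrite lebesgue_measure_itvcc max_r; last by lra.
under eq_eseriesr do rewrite -(box_section_weight_succ i0m).
by rewrite -EFinM exprSr (_ : y 0 i0 + r - (y 0 i0 - r) = 2 * r) //; ring.
Qed.

Lemma cube_cover_volume (y : 'rV[R]_N) (r : R) : 0 < r ->
  (forall p : 'rV[R]_N, (forall i, `|p 0 i - y 0 i| <= r) ->
     exists2 k, A k & forall i, in_box_side i k (p 0 i)) ->
  (((2 * r) ^+ N)%:E <=
   \sum_(k <oo) ((A k)%:R * \prod_(i < N) box_side i k)%:E)%E.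
Proof.
move=> r0 cover; have := @box_cover_section N y y r r0 (leqnn N).
rewrite /box_section_weight /box_factor; under eq_eseriesr do under eq_bigr do rewrite ltn_ord.
by apply => p near_y _; apply: cover => i; exact: near_y.
Qed.

End BoxCovers.

Lemma negligible_cube_sections (R : realType) (N : nat)
    (S : set (R * 'rV[R]_N)) (c : R -> 'rV[R]_N) (r : R) :
  null_set_RN S -> 0 < r ->
  (@lebesgue_measure R).-negligible
    [set t | forall p : 'rV[R]_N, (forall i, `|p 0 i - c t 0 i| <= r) -> S (t, p)].
Proof.
move=> nullS r0; apply: negligible_small_covers => e e0.
pose L := (2 * r) ^+ N; have L0 : 0 < L by rewrite exprn_gt0 // mulr_gt0.
have [a [b [a' [b' [coverS small]]]]] := nullS (L * e) (mulr_gt0 L0 e0).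
pose V k := \prod_(i < N) box_side a' b' i k.
have V0 k : 0 <= V k by apply: prodr_ge0 => i _; rewrite le_max lexx.
pose D := [set t | (L%:E <= \sum_(k <oo) (V k * \1_(`[a k, b k]) t)%:E)%E].
have mD : measurable D.
  rewrite -[D]setTI; apply: (@measurable_lee _ _ _ _ _ (cst L%:E)) => //.
  exact: measurable_series_indic.
exists D; split => // [t cube_t|].
  rewrite /D /=; under eq_eseriesr do rewrite indic_itvccE mulrC.
  apply: (cube_cover_volume (A := fun k => a k <= t <= b k) (y := c t) r0) => p near_c.
  by have [k _ [/= tk pk]] := coverS _ (cube_t p near_c); exists k.
have := markov_series_indic V0 mD (ltW L0) (fun t Dt => Dt).
move=> /le_trans/(_ (nneseries_le_of_sums _ _)) LD.
rewrite -(@lee_pmul2l _ L%:E) ?lte_fin // -EFinM LD // => [k|m].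
  by rewrite mulr_ge0 // le_max lexx.
by under eq_bigr do rewrite mulrC; exact: small.
Qed.

Section Continuity.
Variables (R : realType) (N : nat).

Lemma cvgr_sum (T : Type) (F : set_system T) (FF : Filter F) (n : nat)
    (g : 'I_n -> T -> R) (l : 'I_n -> R) :
  (forall i, g i x @[x --> F] --> l i) ->
  \sum_(i < n) g i x @[x --> F] --> \sum_(i < n) l i.
Proof.
move=> gl; rewrite (_ : (fun x => _) = \sum_(i < n) g i); last first.
  by apply/funext => x; rewrite fct_sumE.
by elim/big_ind2 : _ => [|u a v b ua vb|i _]; [exact: cvg_cst | exact: cvgD | exact: gl].
Qed.

Lemma cvg_dotv (T : Type) (F : set_system T) (FF : Filter F)
    (u v : T -> 'rV[R]_N) (u0 v0 : 'rV[R]_N) :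
  u x @[x --> F] --> u0 -> v x @[x --> F] --> v0 ->
  dotv (u x) (v x) @[x --> F] --> dotv u0 v0.
Proof.
move=> uu0 vv0; apply: cvgr_sum => i.
by apply: cvgM; [have := cvg_comp _ _ uu0 (@coord_continuous _ 1 N 0 i u0)
  | have := cvg_comp _ _ vv0 (@coord_continuous _ 1 N 0 i v0)].
Qed.

Lemma coord_le_mx_norm (u : 'rV[R]_N) (i : 'I_N) : `|u 0 i| <= `|u|.
Proof.
rewrite [`|u|]mx_normrE.
exact: (le_bigmax _ (fun ij : 'I_1 * 'I_N => `|u ij.1 ij.2|) (0, i)).
Qed.

Lemma mx_norm_le_coord (u : 'rV[R]_N) (r : R) : 0 <= r ->
  (forall i, `|u 0 i| <= r) -> `|u| <= r.
Proof.
move=> r0 ur; rewrite [`|u|]mx_normrE.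
by apply: bigmax_le => // -[i j] _; rewrite /= ord1.
Qed.

Lemma mx_norm_le_enorm (u : 'rV[R]_N) : `|u| <= enorm u.
Proof.
apply: mx_norm_le_coord => [|i]; first exact: sqrtr_ge0.
have sq_ge0 (j : 'I_N) : 0 <= u 0 j * u 0 j by rewrite -expr2 sqr_ge0.
rewrite /enorm /dotv -sqrtr_sqr ler_sqrt ?sumr_ge0 // (bigD1 i) //= expr2 lerDl.
exact: sumr_ge0.
Qed.

Lemma enorm_le_mx_norm (u : 'rV[R]_N) : enorm u <= Num.sqrt N%:R * `|u|.
Proof.
rewrite -[`|u|]ger0_norm // -sqrtr_sqr -sqrtrM // /enorm ler_sqrt; last first.
  by rewrite mulr_ge0 // sqr_ge0.
rewrite /dotv mulr_natl -[in X in _ *+ X](card_ord N) -sumr_const.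
apply: ler_sum => i _; rewrite -expr2 -real_normK ?num_real //.
by rewrite lerXn2r ?nnegrE //; exact: coord_le_mx_norm.
Qed.

Definition cube (n : nat) : set 'rV[R]_N :=
  [set v | forall i, `[- n%:R, n%:R]%classic (v 0 i)].

Lemma cube_compact n : compact (cube n).
Proof. exact: (rV_compact (fun=> @segment_compact _ _ _)). Qed.

Lemma lipschitz_on_cubes_continuous (F : 'rV[R]_N -> 'rV[R]_N) :
  (forall n, exists L : R, forall x z, cube n x -> cube n z ->
     enorm (F x - F z) <= L * enorm (x - z)) ->
  continuous F.
Proof.
move=> lip y; apply/(@cvgrPdist_le _ _ _ _ (nbhs_filter y)) => e e0.
pose n := Num.Def.archi_bound (`|y| + 1).
have yn : `|y| + 1 < n%:R by apply: archi_boundP; rewrite addr_ge0.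
have [L FL] := lip n.
pose c := (`|L| + 1) * (Num.sqrt N%:R + 1).
have c0 : 0 < c by rewrite mulr_gt0 // ltr_pwDr // sqrtr_ge0.
have d0 : 0 < Num.min 1 (e / c) by rewrite lt_min ltr01 divr_gt0.
apply/nbhs_ballP; exists (Num.min 1 (e / c)) => // z.
rewrite -ball_normE /= lt_min => /andP[yz1 yze].
have cube_n w : `|y - w| < 1 -> cube n w.
  move=> yw i; rewrite /= in_itv /= -ler_norml.
  have := coord_le_mx_norm (y - w) i; rewrite !mxE => ywi.
  have := coord_le_mx_norm y i; have := ler_normB (y 0 i) (y 0 i - w 0 i).
  by rewrite opprB addrC subrK; lra.
apply: le_trans (mx_norm_le_enorm _) (le_trans (FL y z _ _) _).
- by apply: cube_n; rewrite subrr normr0.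
- exact: cube_n.
have ce : c * (e / c) = e by rewrite mulrC divfK ?gt_eqF.
have sqrtN0 := sqrtr_ge0 (N%:R : R).
apply: le_trans (ler_wpM2r (sqrtr_ge0 _) (ler_norm L)) _.
apply: le_trans (ler_wpM2l (normr_ge0 L) (enorm_le_mx_norm _)) _.
rewrite mulrA -ce; apply: ler_pM => //; last exact: ltW.
by apply: ler_pM => //; rewrite lerDl.
Qed.

Lemma nbhs_cube (y : 'rV[R]_N) (U : set 'rV[R]_N) : nbhs y U ->
  exists2 r : R, 0 < r & forall p : 'rV[R]_N, (forall i, `|p 0 i - y 0 i| <= r) -> U p.
Proof.
move=> /nbhs_ballP[e /= e0 yeU]; exists (e / 2) => [|p near_y]; first by rewrite divr_gt0.
apply: yeU; rewrite -ball_normE /=; apply: (@le_lt_trans _ _ (e / 2)); last by lra.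
by apply: mx_norm_le_coord => [|i]; [rewrite divr_ge0 ?ltW | rewrite !mxE distrC].
Qed.

End Continuity.

(* The library's typeclass hint for this instance does not fire on Lebesgue measure. *)
Lemma lebesgue_ae_filter (R : realType) :
  Filter (nbhs (almost_everywhere (@lebesgue_measure R))).
Proof. exact: ae_filter_ringOfSetsType. Qed.
#[local] Existing Instance lebesgue_ae_filter.

Lemma lt_growth_near_cube (R : realType) (N : nat) (F : 'rV[R]_N -> 'rV[R]_N)
    (a b : R) (y : 'rV[R]_N) :
  F z @[z --> y] --> F y -> a * dotv y y + b < 2 * dotv (F y) y ->
  exists n : nat, forall p : 'rV[R]_N, (forall i, `|p 0 i - y 0 i| <= n.+1%:R^-1) ->
    a * dotv p p + b < 2 * dotv (F p) p.
Proof.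
move=> Fy growth_y.
have gap : (2 * dotv (F z) z - (a * dotv z z + b)) @[z --> y] -->
    2 * dotv (F y) y - (a * dotv y y + b).
  have FF : Filter (nbhs y) := nbhs_filter y.
  have yy : z @[z --> y] --> y := cvg_id.
  apply: cvgB; first by apply: cvgM; [exact: cvg_cst | exact: cvg_dotv].
  by apply: cvgD; [apply: cvgM; [exact: cvg_cst | exact: cvg_dotv] | exact: cvg_cst].
have /nbhs_cube[r r0 cube_r] : \forall z \near y, 0 < 2 * dotv (F z) z - (a * dotv z z + b).
  by apply: (cvgr_gt _ gap); rewrite subr_gt0.
have [n nr] := exists_natSinv_le r0; exists n => p near_y.
by rewrite -subr_gt0; apply: cube_r => i; exact: le_trans (near_y i) nr.
Qed.

Lemma LC_ae_continuous (R : realType) (N : nat) (f : R -> 'rV[R]_N -> 'rV[R]_N) :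
  LC f -> {ae @lebesgue_measure R, forall t, continuous (f t)}.
Proof.
move=> [_ fLC]; have /choice[l fl] : forall n, exists l : R -> R,
    {ae @lebesgue_measure R, forall t, forall y z, cube n y -> cube n z ->
       enorm (f t y - f t z) <= l t * enorm (y - z)}.
  move=> n; have [mK [l [_ [_ fl]]]] := fLC _ (@cube_compact R N n).
  by exists l; move: fl; apply: filterS => t fl_t y z yn zn; case: (fl_t y z yn zn).
move: (ae_foralln fl); apply: filterS => t fl_t.
by apply: lipschitz_on_cubes_continuous => n; exists (l n t); exact: fl_t.
Qed.

Theorem proposition6p1 (R : realType) (N : nat)
  (f : R -> 'rV[R]_N -> 'rV[R]_N) (alpha beta : R -> R)
  (I : set R) (x : R -> 'rV[R]_N) :
  LC f ->
  L1loc alpha -> L1loc beta -> (forall t, 0 <= beta t) ->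
  ae_RN (fun t y => 2 * dotv (f t y) y <= alpha t * dotv y y + beta t) ->
  is_interval I ->
  cara_solution f I x ->
  {ae (@lebesgue_measure R), forall t, I t ->
     2 * dotv (f t (x t)) (x t) <= alpha t * dotv (x t) (x t) + beta t}.
Proof.
move=> fLC _ _ _ nullS _ _.
pose B n := [set t | forall p : 'rV[R]_N, (forall i, `|p 0 i - x t 0 i| <= n.+1%:R^-1) ->
  ~ (2 * dotv (f t p) p <= alpha t * dotv p p + beta t)].
have rn_gt0 n : 0 < n.+1%:R^-1 :> R by rewrite invr_gt0.
have B0 : {ae @lebesgue_measure R, forall t, ~ (\bigcup_n B n) t}.
  apply: negligibleS (negligible_bigcup (fun n => negligible_cube_sections x nullS (rn_gt0 n))).
  by move=> t /contrapT[n _ Bn]; exists n.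
move: (LC_ae_continuous fLC) B0; apply: filterS2 => t ft_cont notB _.
rewrite leNgt; apply/negP => growth_t; apply: notB.
have [n cube_n] := lt_growth_near_cube (ft_cont (x t)) growth_t.
by exists n => // p /cube_n; rewrite ltNge => /negP.
Qed.
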